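(* Let $A$ and $B$ be NFAs with at most $m$ and at most $n$ states, respectively, such that there is no infinite tower of prefixes between $L(A)$ and $L(B)$. Then every tower of prefixes between $L(A)$ and $L(B)$ has height at most $2^{m+n-1}$. Moreover, for infinitely many pairs $(m,n)$ there exist NFAs with $m$ and $n$ states, with no infinite tower of prefixes between their languages, admitting a tower of prefixes of height at least $2^{m+n-2}$.
   Context: A string $v$ is a prefix of $w$, written $v\le w$, if $w=vu$ for some string $u$. A sequence $(w_i)_{i=1}^r$ of strings is a tower of prefixes between languages $K$ and $L$ if $w_1\in K\cup L$ and for all $i=1,\dots,r-1$: $w_i\le w_{i+1}$, $w_i\in K$ implies $w_{i+1}\in L$, and $w_i\in L$ implies $w_{i+1}\in K$; $r$ is its height. An infinite tower of prefixes is an infinite sequence with the same properties. *)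

From mathcomp Require Import all_boot.
Set Implicit Arguments. Unset Strict Implicit. Unset Printing Implicit Defensive.

Record nfa (Sigma : finType) := NFA {
  nfa_state : finType;
  nfa_init  : {set nfa_state};
  nfa_final : {set nfa_state};
  nfa_trans : nfa_state -> Sigma -> {set nfa_state}
}.

Definition nfa_size (Sigma : finType) (A : nfa Sigma) : nat := #|nfa_state A|.

Definition nfa_step (Sigma : finType) (A : nfa Sigma)
  (S : {set nfa_state A}) (a : Sigma) : {set nfa_state A} :=
  \bigcup_(q in S) nfa_trans q a.

Definition nfa_reach (Sigma : finType) (A : nfa Sigma) (w : seq Sigma)
  : {set nfa_state A} := foldl (@nfa_step Sigma A) (nfa_init A) w.

Definition nfa_lang (Sigma : finType) (A : nfa Sigma) (w : seq Sigma) : Prop :=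
  [exists q in nfa_reach A w, q \in nfa_final A].

(* (w_1, ..., w_r) = (w 0, ..., w (r-1)) is a tower of prefixes between K and L
   of height r (r >= 1). *)
Definition tower (T : eqType) (K L : seq T -> Prop) (w : nat -> seq T) (r : nat)
  : Prop :=
  0 < r /\ (K (w 0) \/ L (w 0)) /\
  forall i, i.+1 < r ->
    [/\ prefix (w i) (w i.+1),
        K (w i) -> L (w i.+1) &
        L (w i) -> K (w i.+1)].

Definition inf_tower (T : eqType) (K L : seq T -> Prop) (w : nat -> seq T) : Prop :=
  (K (w 0) \/ L (w 0)) /\
  forall i,
    [/\ prefix (w i) (w i.+1),
        K (w i) -> L (w i.+1) &
        L (w i) -> K (w i.+1)].

From mathcomp Require Import all_boot zify.
Set Implicit Arguments. Unset Strict Implicit. Unset Printing Implicit Defensive.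

(* Upper bound: if two positions i < j of a tower reach the same pair of state
   sets in A and B, pumping the factor of w_j after w_i produces an infinite
   tower.  Without infinite towers the pairs along a tower are therefore
   pairwise distinct; moreover L(A) and L(B) are disjoint (a common word is a
   constant infinite tower), so each pair is accepting for exactly one of the
   automata.  As soon as an automaton has a final state, at least half of its
   state sets are accepting, which leaves at most 2^(m+n-1) such pairs.

   Lower bound: B counts down in binary on n states, A accepts the words
   ending in the letter 0.  Acceptance by B and by A exclude each other, so
   each step of a tower strictly decreases the counter; decrementing it by one
   at a time yields a tower of height 2^n with m = 2. *)

Lemma divn_modn_succ k p : 0 < p ->
  (k.+1 %/ p, k.+1 %% p) =
  if (k %% p).+1 == p then ((k %/ p).+1, 0) else (k %/ p, (k %% p).+1).
Proof.
move=> p_gt0; have eqk : k.+1 = k %/ p * p + (k %% p).+1.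
  by rewrite {1}(divn_eq k p) addnS.
have := ltn_pmod k p_gt0; rewrite leq_eqVlt eq_sym.
case: eqP => [e _ | _ /= lt]; rewrite eqk.
  by rewrite -e -mulSnr mulnK // modnMl.
by rewrite divnMDl // modnMDl (divn_small lt) (modn_small lt) addn0.
Qed.

Lemma flatten_nseqS (T : Type) (u : seq T) t :
  flatten (nseq t.+1 u) = flatten (nseq t u) ++ u.
Proof. by rewrite -addn1 nseqD flatten_cat /= cats0. Qed.

Lemma foldl_flatten_nseq (S T : Type) (f : S -> T -> S) (s : S) (u : seq T) t :
  foldl f s u = s -> foldl f s (flatten (nseq t u)) = s.
Proof. by move=> fu; elim: t => //= t IH; rewrite foldl_cat fu. Qed.

Lemma prefix_cat2l (T : eqType) (s x y : seq T) :
  prefix (s ++ x) (s ++ y) = prefix x y.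
Proof. by rewrite prefix_catr // eqxx. Qed.

Lemma sum_exp2 j : (\sum_(i < j) 2 ^ i).+1 = 2 ^ j.
Proof. by rewrite -[\sum_(i < j) _]mul1n -(predn_exp 2 j) prednK ?expn_gt0. Qed.

Section NfaReach.
Variables (Sigma : finType) (X : nfa Sigma).

Lemma nfa_reach_cat x y :
  nfa_reach X (x ++ y) = foldl (@nfa_step Sigma X) (nfa_reach X x) y.
Proof. by rewrite /nfa_reach foldl_cat. Qed.

Lemma nfa_lang_reach x y : nfa_reach X x = nfa_reach X y -> nfa_lang X x = nfa_lang X y.
Proof. by rewrite /nfa_lang => ->. Qed.

Lemma nfa_reach_pump x u y t : nfa_reach X (x ++ u) = nfa_reach X x ->
  nfa_reach X (x ++ flatten (nseq t u) ++ y) = nfa_reach X (x ++ y).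
Proof.
rewrite catA !nfa_reach_cat => xu.
by rewrite (@foldl_flatten_nseq _ _ _ _ u) // -nfa_reach_cat.
Qed.

Lemma nfa_lang_final0 x : nfa_final X = set0 -> ~ nfa_lang X x.
Proof. by move=> F0 /existsP [q /andP [_]]; rewrite F0 inE. Qed.

End NfaReach.

Section Towers.
Variables (T : eqType) (K L : seq T -> Prop).

Lemma inf_tower_const x : K x -> L x -> inf_tower K L (fun=> x).
Proof. by move=> Kx Lx; split=> [|i]; [left | split=> //; apply: prefix_refl]. Qed.

Lemma tower_height_le1 w r :
  (forall x, ~ K x) \/ (forall x, ~ L x) -> tower K L w r -> r <= 1.
Proof.
move=> empty [_ [mem0 step]]; rewrite leqNgt; apply/negP => /step [_ KL LK].
by case: empty => e; case: mem0 => [Kw | Lw];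
  [exact: e Kw | exact: e (LK Lw) | exact: e (KL Kw) | exact: e Lw].
Qed.

Lemma inf_tower_tower w r : inf_tower K L w -> tower K L w r.+1.
Proof. by case=> mem0 step; do 2!split=> //; move=> i _; apply: step. Qed.

Variables (w : nat -> seq T) (r : nat).
Hypothesis tw : tower K L w r.

Lemma tower_mem i : i < r -> K (w i) \/ L (w i).
Proof.
case: tw => _ [mem0 step]; elim: i => // i IH lt_ir.
have [_ KL LK] := step i lt_ir.
by case: (IH (ltnW lt_ir)) => [/KL h | /LK h]; [right | left].
Qed.

Lemma tower_prefix i j : i <= j -> j < r -> prefix (w i) (w j).
Proof.
case: tw => _ [_ step]; elim: j => [|j IH].
  by rewrite leqn0 => /eqP -> _; apply: prefix_refl.
rewrite leq_eqVlt => /orP [/eqP -> _ | le_ij lt_jr]; first exact: prefix_refl.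
by apply: prefix_trans (IH le_ij (ltnW lt_jr)) _; case: (step j lt_jr).
Qed.

End Towers.

Section Pumping.
Variables (Sigma : finType) (A B : nfa Sigma) (w : nat -> seq Sigma) (r : nat).
Hypothesis tw : tower (nfa_lang A) (nfa_lang B) w r.
Variables i j : nat.
Hypotheses (lt_ij : i < j) (lt_jr : j < r).
Hypotheses (eqA : nfa_reach A (w i) = nfa_reach A (w j))
           (eqB : nfa_reach B (w i) = nfa_reach B (w j)).

(* The k-th word of the infinite tower is
   w i ++ (v p)^(k / p) ++ v (k mod p): it reaches the same state sets as
   w (i + k mod p), so it inherits the alternation of the original tower. *)
Let p := j - i.
Let v s := drop (size (w i)) (w (i + s)).
Let pumped k := w i ++ flatten (nseq (k %/ p) (v p)) ++ v (k %% p).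

Let p_gt0 : 0 < p. Proof. by rewrite subn_gt0. Qed.
Let i_add_p : i + p = j. Proof. by rewrite subnKC // ltnW. Qed.

Let w_split s : s <= p -> w (i + s) = w i ++ v s.
Proof.
move=> le_sp; rewrite /v; have /prefixP [z ->] : prefix (w i) (w (i + s)).
  apply: (tower_prefix tw (leq_addr _ _)).
  by apply: leq_ltn_trans lt_jr; rewrite -i_add_p leq_add2l.
by rewrite drop_size_cat.
Qed.

Let prefix_v_succ s : s < p -> prefix (v s) (v s.+1).
Proof.
move=> lt_sp; rewrite -(prefix_cat2l (w i)) -!w_split ?(ltnW lt_sp) // addnS.
apply: (tower_prefix tw (leqnSn _)); rewrite /p in lt_sp; lia.
Qed.

Let prefix_v_loop s : s <= p -> prefix (v s) (v p).
Proof.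
move=> le_sp; have le_j : i + s <= j by rewrite -i_add_p leq_add2l.
by have := tower_prefix tw le_j lt_jr; rewrite -i_add_p !w_split // prefix_cat2l.
Qed.

Let reach_pumped (X : nfa Sigma) : nfa_reach X (w i) = nfa_reach X (w j) ->
  forall k, nfa_reach X (pumped k) = nfa_reach X (w (i + k %% p)).
Proof.
move=> eqX k; rewrite /pumped nfa_reach_pump; first by rewrite w_split // ltnW ?ltn_pmod.
by rewrite -w_split // i_add_p eqX.
Qed.

Let reach_pumped_succ (X : nfa Sigma) : nfa_reach X (w i) = nfa_reach X (w j) ->
  forall k, nfa_reach X (pumped k.+1) = nfa_reach X (w (i + k %% p).+1).
Proof.
move=> eqX k; rewrite reach_pumped //.
have := divn_modn_succ k p_gt0; case: eqP => [e [_ ->] | _ [_ ->]].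
  by rewrite addn0 -addnS e i_add_p eqX.
by rewrite addnS.
Qed.

Let prefix_pumped k : prefix (pumped k) (pumped k.+1).
Proof.
have lt_kp := ltn_pmod k p_gt0.
rewrite /pumped; have := divn_modn_succ k p_gt0.
case: eqP => [_ [-> ->] | _ [-> ->]]; rewrite !prefix_cat2l; last exact: prefix_v_succ.
have -> : v 0 = [::] by rewrite /v addn0 drop_size.
by rewrite cats0 flatten_nseqS prefix_cat2l prefix_v_loop // ltnW.
Qed.

Lemma tower_loop_inf_tower : exists w', inf_tower (nfa_lang A) (nfa_lang B) w'.
Proof.
exists pumped; split.
  rewrite (nfa_lang_reach (reach_pumped eqA 0)) (nfa_lang_reach (reach_pumped eqB 0)).
  by rewrite mod0n addn0; exact (tower_mem tw (ltn_trans lt_ij lt_jr)).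
move=> k; have lt_succ : (i + k %% p).+1 < r.
  by have := ltn_pmod k p_gt0; rewrite /p; lia.
case: tw => _ [_ /(_ _ lt_succ) [_ AB BA]]; split; first exact: prefix_pumped.
  rewrite (nfa_lang_reach (reach_pumped eqA k)).
  by rewrite (nfa_lang_reach (reach_pumped_succ eqB k)).
rewrite (nfa_lang_reach (reach_pumped eqB k)).
by rewrite (nfa_lang_reach (reach_pumped_succ eqA k)).
Qed.

End Pumping.

Lemma card_sets (T : finType) : #|{set T}| = 2 ^ #|T|.
Proof. by rewrite -[LHS]cardsT -powersetT card_powerset cardsT. Qed.

Lemma card_sets_mem (T : finType) (q : T) :
  (#|[set S : {set T} | q \in S]|).*2 = 2 ^ #|T|.
Proof.
pose toggle (S : {set T}) := if q \in S then S :\ q else q |: S.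
have toggleK : involutive toggle.
  move=> S; rewrite /toggle; case qS: (q \in S).
    by rewrite setD11 setD1K.
  by rewrite setU11 setU1K // qS.
have toggle_mem :
    toggle @^-1: [set S : {set T} | q \in S] = ~: [set S : {set T} | q \in S].
  by apply/setP => S; rewrite !inE /toggle; case: (q \in S); rewrite !inE eqxx.
rewrite -addnn -{2}(card_preimset _ (inv_inj toggleK)) toggle_mem cardsC.
exact: card_sets.
Qed.

Lemma card_sets_upward (T : finType) (q : T) (c : pred {set T}) :
  (forall S : {set T}, q \in S -> c S) -> 2 ^ #|T| <= #|[set S | c S]|.*2.
Proof.
move=> qc; rewrite -(card_sets_mem q) leq_double subset_leq_card //.
by apply/subsetP => S; rewrite !inE; apply: qc.
Qed.

Lemma leq_cross_half x x' y y' N :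
  x' <= x -> y' <= y -> (x + x') * (y + y') = N.*2 -> x * y' + x' * y <= N.
Proof. by move=> /subnKC <- /subnKC <-; nia. Qed.

Lemma card_xor_sets (TA TB : finType) (a : pred {set TA}) (b : pred {set TB})
    (qA : TA) (qB : TB) :
  (forall S : {set TA}, qA \in S -> a S) -> (forall S : {set TB}, qB \in S -> b S) ->
  #|[set P : {set TA} * {set TB} | a P.1 (+) b P.2]| <= 2 ^ (#|TA| + #|TB| - 1).
Proof.
move=> aqA bqB; set G := [set P | _]; set SA := [set S | a S]; set SB := [set S | b S].
have halfA : 2 ^ #|TA| <= #|SA|.*2 by apply: card_sets_upward aqA.
have halfB : 2 ^ #|TB| <= #|SB|.*2 by apply: card_sets_upward bqB.
have cardA : #|SA| + #|~: SA| = 2 ^ #|TA| by rewrite cardsC card_sets.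
have cardB : #|SB| + #|~: SB| = 2 ^ #|TB| by rewrite cardsC card_sets.
have sub_G : G \subset setX SA (~: SB) :|: setX (~: SA) SB.
  by apply/subsetP => -[S T]; rewrite !inE /=; case: (a S); case: (b T).
apply: leq_trans (subset_leq_card sub_G) _.
apply: leq_trans (leq_card_setU _ _).1 _; rewrite !cardsX.
apply: leq_cross_half; [lia | lia | rewrite cardA cardB -expnD -mul2n -expnS].
have nA_gt0 : 0 < #|TA| by apply/card_gt0P; exists qA.
by congr (2 ^ _); lia.
Qed.

Theorem tower_height_le (Sigma : finType) (A B : nfa Sigma) (w : nat -> seq Sigma) r :
  ~ (exists w, inf_tower (nfa_lang A) (nfa_lang B) w) ->
  tower (nfa_lang A) (nfa_lang B) w r -> r <= 2 ^ (nfa_size A + nfa_size B - 1).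
Proof.
move=> no_inf tw.
have [FA0 | [qA qA_fin]] := set_0Vmem (nfa_final A).
  apply: leq_trans (tower_height_le1 _ tw) _; last by rewrite expn_gt0.
  by left=> x; apply: nfa_lang_final0.
have [FB0 | [qB qB_fin]] := set_0Vmem (nfa_final B).
  apply: leq_trans (tower_height_le1 _ tw) _; last by rewrite expn_gt0.
  by right=> x; apply: nfa_lang_final0.
pose reach_pair (k : 'I_r) := (nfa_reach A (w k), nfa_reach B (w k)).
have reach_pair_inj : injective reach_pair.
  move=> k l [eqA eqB]; apply: val_inj; case: (ltngtP k l) => // lt_kl; case: no_inf.
    exact (tower_loop_inf_tower tw lt_kl (ltn_ord l) eqA eqB).
  exact (tower_loop_inf_tower tw lt_kl (ltn_ord k) (esym eqA) (esym eqB)).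
rewrite -[r]card_ord -(card_imset _ reach_pair_inj).
apply: (leq_trans (subset_leq_card _)
   (card_xor_sets (a := fun S => [exists q in S, q \in nfa_final A])
                  (b := fun S => [exists q in S, q \in nfa_final B])
                  (qA := qA) (qB := qB) _ _)).
- apply/subsetP => _ /imsetP [k _ ->]; rewrite inE /=.
  have not_both : ~ (nfa_lang A (w k) /\ nfa_lang B (w k)).
    by case=> inA inB; apply: no_inf; exists (fun=> w k); apply: inf_tower_const.
  move: (tower_mem tw (ltn_ord k)) not_both; rewrite /nfa_lang.
  by case: [exists q in nfa_reach A _, _]; case: [exists q in nfa_reach B _, _];
    intuition.
- by move=> S qS; apply/existsP; exists qA; rewrite qS.
by move=> S qS; apply/existsP; exists qB; rewrite qS.
Qed.

Section CounterAutomaton.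
Variable k : nat.
Local Notation n := k.+1.

(* Reading letter a in state a jumps to any smaller state, other states stay
   put: on sets of states read as binary numbers this is a borrowing
   decrement. *)
Definition counter_nfa : nfa 'I_n := @NFA 'I_n 'I_n setT [set ord0]
  (fun q a => if q == a then [set i : 'I_n | i < a] else [set q]).

Definition last0_nfa : nfa 'I_n := @NFA 'I_n bool [set false] [set true]
  (fun _ a => [set a == ord0]).

Local Notation step := (@nfa_step _ counter_nfa).

Definition weight (S : {set 'I_n}) := \sum_(i in S) 2 ^ i.

Lemma counter_step_notin (S : {set 'I_n}) (j : 'I_n) : j \notin S -> step S j = S.
Proof.
move=> jS; apply/setP => x; apply/bigcupP/idP => [[q qS] | xS].
  by rewrite /= ifN ?inE; [move=> /eqP -> | apply: contraNneq jS => <-].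
by exists x => //=; rewrite ifN ?inE //; apply: contraNneq jS => <-.
Qed.

Lemma counter_step_mem (S : {set 'I_n}) (j : 'I_n) :
  j \in S -> step S j = (S :\ j) :|: [set i : 'I_n | i < j].
Proof.
move=> jS; apply/setP => x; apply/bigcupP/idP => [[q qS] | ].
  rewrite /=; case: eqP => [<- | /eqP neq_qj]; rewrite !inE.
    by move=> ->; rewrite orbT.
  by move=> /eqP ->; rewrite neq_qj qS.
rewrite !inE => /orP [/andP [neq_xj xS] | lt_xj].
  by exists x => //=; rewrite ifN // inE.
by exists j => //=; rewrite eqxx inE.
Qed.

Lemma weight0 : weight set0 = 0.
Proof. exact: big_set0. Qed.

Lemma weightUI (X Y : {set 'I_n}) :
  weight (X :|: Y) + weight (X :&: Y) = weight X + weight Y.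
Proof.
rewrite /weight !(big_mkcond (fun i => i \in _)) -!big_split /=.
by apply: eq_bigr => i _; rewrite !inE; case: (i \in X); case: (i \in Y); rewrite ?addn0.
Qed.

Lemma weightD1 (S : {set 'I_n}) (j : 'I_n) :
  j \in S -> weight S = weight (S :\ j) + 2 ^ j.
Proof.
move=> jS; rewrite /weight (bigD1 j) //= addnC; congr (_ + _).
by apply: eq_bigl => i; rewrite !inE andbC.
Qed.

Lemma weight_lt_set j : j <= n -> (weight [set i : 'I_n | i < j]).+1 = 2 ^ j.
Proof.
move=> le_jn; rewrite -sum_exp2 (big_ord_widen n) //.
by congr _.+1; apply: eq_bigl => i; rewrite inE.
Qed.

Lemma weight_counter_step_lt (S : {set 'I_n}) (j : 'I_n) :
  j \in S -> weight (step S j) < weight S.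
Proof.
move=> jS; rewrite counter_step_mem // (weightD1 jS).
have := weightUI (S :\ j) [set i : 'I_n | i < j].
by have := weight_lt_set (ltnW (ltn_ord j)); lia.
Qed.

Lemma weight_counter_step_min (S : {set 'I_n}) (j : 'I_n) :
  j \in S -> (forall i, i \in S -> j <= i) -> (weight (step S j)).+1 = weight S.
Proof.
move=> jS j_min; rewrite counter_step_mem // (weightD1 jS).
have := weightUI (S :\ j) [set i : 'I_n | i < j].
have -> : (S :\ j) :&: [set i : 'I_n | i < j] = set0.
  apply/setP => x; rewrite !inE; apply/negP => /andP [/andP [_ xS] lt_xj].
  by have := j_min x xS; lia.
by rewrite weight0; have := weight_lt_set (ltnW (ltn_ord j)); lia.
Qed.

Lemma counter_steps_eq_or_lt (z : seq 'I_n) (S : {set 'I_n}) :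
  foldl step S z = S \/ weight (foldl step S z) < weight S.
Proof.
elim: z S => [|a z IH] S /=; first by left.
have [jS | jS] := boolP (a \in S); last by rewrite counter_step_notin //; apply: IH.
right; case: (IH (step S a)) => [-> | lt]; first exact: weight_counter_step_lt.
exact: ltn_trans lt (weight_counter_step_lt jS).
Qed.

Lemma counter_langE (x : seq 'I_n) :
  nfa_lang counter_nfa x <-> ord0 \in nfa_reach counter_nfa x.
Proof.
split; first by move=> /existsP [q /andP [qx]]; rewrite inE => /eqP <-.
by move=> x0; apply/existsP; exists ord0; rewrite x0 inE eqxx.
Qed.

Lemma last0_step (R : {set bool}) (a : 'I_n) :
  R != set0 -> @nfa_step _ last0_nfa R a = [set a == ord0].
Proof.
case/set0Pn => q qR; apply/setP => x.
by apply/bigcupP/idP => [[] // | xa]; exists q.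
Qed.

Lemma last0_reach_rcons (y : seq 'I_n) (a : 'I_n) :
  nfa_reach last0_nfa (rcons y a) = [set a == ord0].
Proof.
elim/last_ind: y a => [|y b IH] a;
  rewrite /nfa_reach foldl_rcons -/(nfa_reach _ _) last0_step //.
  by apply/set0Pn; exists false; rewrite inE.
by rewrite IH; apply/set0Pn; exists (b == ord0); rewrite inE.
Qed.

Lemma last0_langE (x : seq 'I_n) :
  nfa_lang last0_nfa x <-> exists y, x = rcons y ord0.
Proof.
split; last first.
  by move=> [y ->]; apply/existsP; exists true; rewrite last0_reach_rcons !inE eqxx.
case/lastP: x => [|y a]; first by move=> /existsP [q /andP [/set1P -> /set1P]].
rewrite /nfa_lang last0_reach_rcons => /existsP [q /andP [/set1P -> /set1P /eqP ->]].
by exists y.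
Qed.

Lemma counter_step_ord0 (S : {set 'I_n}) : ord0 \notin step S ord0.
Proof.
have [S0 | S0] := boolP (ord0 \in S); last by rewrite counter_step_notin.
by rewrite counter_step_mem // !inE eqxx.
Qed.

Lemma last0_lang_counter x : nfa_lang last0_nfa x -> ord0 \notin nfa_reach counter_nfa x.
Proof.
by move=> /last0_langE [y ->]; rewrite /nfa_reach foldl_rcons counter_step_ord0.
Qed.

Lemma counter_no_inf_tower :
  ~ (exists w, inf_tower (nfa_lang last0_nfa) (nfa_lang counter_nfa) w).
Proof.
move=> [w inf_w]; pose wt i := weight (nfa_reach counter_nfa (w i)).
have wt_decr i : wt i.+1 < wt i.
  have [pre AB BA] := inf_w.2 i.
  have neq : nfa_reach counter_nfa (w i.+1) != nfa_reach counter_nfa (w i).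
    case: (tower_mem (inf_tower_tower i inf_w) (ltnSn i)) => [/[dup] /AB | /[dup] /BA].
      by move=> /counter_langE x1 /last0_lang_counter; apply: contraNneq => <-.
    by move=> /last0_lang_counter x1 /counter_langE; apply: contraTneq => <-.
  rewrite /wt; move/prefixP: pre neq => [z ->]; rewrite nfa_reach_cat.
  have [-> | //] := counter_steps_eq_or_lt z (nfa_reach counter_nfa (w i)).
  by rewrite eqxx.
have wt_bound i : wt i + i <= wt 0.
  by elim: i => [|i IH]; [rewrite addn0 | have := wt_decr i; lia].
by have := wt_bound (wt 0).+1; lia.
Qed.

Definition least (S : {set 'I_n}) : 'I_n :=
  odflt ord0 [pick j in S | [forall i in S, j <= i]].

Lemma leastP (S : {set 'I_n}) :
  S != set0 -> least S \in S /\ forall i, i \in S -> least S <= i.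
Proof.
case/set0Pn => x xS; rewrite /least.
case: pickP => [j /andP [jS /forallP j_min] | no_min] /=.
  by split=> // i iS; have /implyP := j_min i; apply.
case: (arg_minnP (fun i : 'I_n => val i) xS) => j jS j_min.
by have /andP [] := negbT (no_min j); split=> //; apply/forallP => i; apply/implyP/j_min.
Qed.

Fixpoint countdown t : seq 'I_n :=
  if t is t'.+1 then rcons (countdown t') (least (nfa_reach counter_nfa (countdown t')))
  else [::].

Lemma weight_countdown t :
  t < 2 ^ n -> (weight (nfa_reach counter_nfa (countdown t)) + t).+1 = 2 ^ n.
Proof.
elim: t => [_ | t IH lt_t].
  rewrite addn0 -(weight_lt_set (leqnn n)); congr (weight _).+1.
  by apply/setP => i; rewrite !inE ltn_ord.
rewrite /= /nfa_reach foldl_rcons -/(nfa_reach _ _).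
have := IH (ltnW lt_t); set S := nfa_reach counter_nfa (countdown t) => wS.
have /leastP [leastS least_min] : S != set0.
  by apply: contraTneq lt_t => S0; rewrite -wS S0 weight0 ltnn.
by have := weight_counter_step_min leastS least_min; lia.
Qed.

Lemma countdown_reach_neq0 t :
  t.+1 < 2 ^ n -> nfa_reach counter_nfa (countdown t) != set0.
Proof.
move=> lt_t; have wS := weight_countdown (ltnW lt_t).
by apply: contraTneq lt_t => S0; rewrite -wS S0 weight0 ltnn.
Qed.

Lemma countdown_tower :
  tower (nfa_lang last0_nfa) (nfa_lang counter_nfa) countdown (2 ^ n).
Proof.
split; first by rewrite expn_gt0.
split; first by right; apply/counter_langE; rewrite inE.
move=> t /countdown_reach_neq0 /leastP [leastS least_min].
set S := nfa_reach counter_nfa (countdown t) in leastS least_min *.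
have reachS : nfa_reach counter_nfa (countdown t.+1) = step S (least S).
  by rewrite /= /nfa_reach foldl_rcons.
split; first exact: prefix_rcons.
  move=> /last0_lang_counter S0; apply/counter_langE.
  rewrite reachS counter_step_mem // !inE.
  apply/orP; right; rewrite lt0n; apply: contraNneq S0 => least0.
  by have <- : least S = ord0 by apply: val_inj.
move=> /counter_langE S0; apply/last0_langE; exists (countdown t); congr rcons.
by apply: val_inj; have := least_min _ S0; rewrite leqn0 => /eqP.
Qed.

End CounterAutomaton.

Theorem corollary16 :
  (forall (Sigma : finType) (m n : nat) (A B : nfa Sigma),
      nfa_size A <= m -> nfa_size B <= n ->
      ~ (exists w, inf_tower (nfa_lang A) (nfa_lang B) w) ->
      forall (w : nat -> seq Sigma) (r : nat),
        tower (nfa_lang A) (nfa_lang B) w r -> r <= 2 ^ (m + n - 1))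
  /\
  (forall N : nat, exists m n : nat, N <= m + n /\
     exists (Sigma : finType) (A B : nfa Sigma),
       [/\ nfa_size A = m, nfa_size B = n,
           ~ (exists w, inf_tower (nfa_lang A) (nfa_lang B) w) &
           exists (w : nat -> seq Sigma) (r : nat),
             tower (nfa_lang A) (nfa_lang B) w r /\ 2 ^ (m + n - 2) <= r]).
Proof.
split.
  move=> Sigma m n A B le_Am le_Bn no_inf w r /(tower_height_le no_inf) le_r.
  by rewrite (leq_trans le_r) // leq_pexp2l // leq_sub2r // leq_add.
move=> N; exists 2, N.+1; split; first lia.
exists 'I_N.+1, (last0_nfa N), (counter_nfa N); split.
- by rewrite /nfa_size card_bool.
- by rewrite /nfa_size card_ord.
- exact: counter_no_inf_tower.
- by exists (countdown N), (2 ^ N.+1); split; [exact: countdown_tower | rewrite addKn].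
Qed.
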